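(* Let $I=\mathcal{M}^0[K,G,K;P]$ be a finite Rees $0$-matrix semigroup with $|K|\ge3$, where $P$ is the $K\times K$ matrix with $p_{\kappa,\kappa}=e$ and $p_{\lambda,\kappa}=0$ for $\lambda\ne\kappa$. Then $\sigma_i(I)=3$.
   Context: $G$ is a finite group with identity $e$. $\mathcal{M}^0[K,G,K;P]$ is $(K\times G\times K)\cup\{0\}$ with $(\kappa,g,\lambda)(\mu,h,\nu)=(\kappa,gp_{\lambda,\mu}h,\nu)$ if $p_{\lambda,\mu}\ne0$, $=0$ otherwise, and $0$ a zero element; it is an inverse semigroup. An inverse subsemigroup is a subsemigroup closed under taking the unique inverse. $\sigma_i(I)$ is the least positive integer $n$ such that $I$ is the union of $n$ proper inverse subsemigroups, or $\infty$ if none exists. *)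

From mathcomp Require Import all_boot all_fingroup.
Set Implicit Arguments. Unset Strict Implicit. Unset Printing Implicit Defensive.
Local Open Scope group_scope.

(* Rees 0-matrix semigroup M^0[K,G,K;P] over a finite group gT, with the
   sandwich matrix P : K -> K -> option gT (None = 0).  Elements: None = 0,
   Some (k, g, l) = (k, g, l). *)
Definition rees_elt (K : finType) (gT : finGroupType) := option (K * gT * K).

Definition rees_mul (K : finType) (gT : finGroupType) (P : K -> K -> option gT)
  (x y : rees_elt K gT) : rees_elt K gT :=
  match x, y with
  | Some (k, g, l), Some (m, h, n) =>
      match P l m with
      | Some p => Some (k, g * p * h, n)
      | None => None
      end
  | _, _ => None
  end.

Definition diagP (K : finType) (gT : finGroupType) (l k : K) : option gT :=
  if l == k then Some 1 else None.

(* S is an inverse subsemigroup: nonempty, closed under multiplication, and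
   closed under taking (the unique) inverse y of x, i.e. x y x = x, y x y = y. *)
Definition inverse_subsemigroup (T : finType) (mul : T -> T -> T) (S : {set T}) : Prop :=
  S != set0 /\
  (forall x y, x \in S -> y \in S -> mul x y \in S) /\
  (forall x y, x \in S -> mul (mul x y) x = x -> mul (mul y x) y = y -> y \in S).

Definition inv_covered_by (T : finType) (mul : T -> T -> T) (n : nat) : Prop :=
  exists F : 'I_n -> {set T},
    (forall i, inverse_subsemigroup mul (F i) /\ F i != [set: T]) /\
    \bigcup_(i < n) F i = [set: T].

Definition sigma_i_eq (T : finType) (mul : T -> T -> T) (n : nat) : Prop :=
  0 < n /\ inv_covered_by mul n /\
  (forall m, 0 < m -> m < n -> ~ inv_covered_by mul m).

(* The three sets "0 together with all (k, g, l) with k, l <> a", for three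
   distinct indices a, are proper inverse subsemigroups covering I.  Conversely,
   if I = X ∪ Y with X, Y inverse subsemigroups, then every block {k} × G × {l}
   lies entirely in X or entirely in Y; containing a block is a symmetric and
   transitive relation on indices, and two such relations covering K × K force
   one of them to be total, so X or Y contains every nonzero element and hence
   also 0 = (a, 1, b)(a, 1, b) for a <> b. *)

From mathcomp Require Import all_boot all_fingroup.
From Stdlib Require Import Classical.
Set Implicit Arguments. Unset Strict Implicit. Unset Printing Implicit Defensive.
Local Open Scope group_scope.

Lemma per_cover_total (A : Type) (R S : A -> A -> Prop) :
  (forall x y, R x y -> R y x) -> (forall x y z, R x y -> R y z -> R x z) ->
  (forall x y, S x y -> S y x) -> (forall x y z, S x y -> S y z -> S x z) ->
  (forall x y, R x y \/ S x y) ->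
  (forall x y, R x y) \/ (forall x y, S x y).
Proof.
move=> symR transR symS transS cover.
have [|notR] := classic (forall x y, R x y); first by left.
right=> c d; have [//|notScd] := classic (S c d).
exfalso; apply: notR => a b.
have Rcd : R c d by case: (cover c d).
have R_c x : R x c.
  case: (cover x c) => // Sxc; case: (cover x d) => [Rxd|Sxd].
    exact: transR Rxd (symR _ _ Rcd).
  by case: notScd; apply: transS (symS _ _ Sxc) Sxd.
exact: transR (R_c a) (symR _ _ (R_c b)).
Qed.

Section DiagonalRees.
Variables (K : finType) (gT : finGroupType).
Local Notation T := (rees_elt K gT).
Local Notation mul := (@rees_mul K gT (@diagP K gT)).

Lemma rees_mulE k g l m h n :
  mul (Some (k, g, l)) (Some (m, h, n)) =
  if l == m then Some (k, g * h, n) else None.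
Proof. by rewrite /rees_mul /diagP; case: (l == m); rewrite ?mulg1. Qed.

Section InverseSubsemigroup.
Variable X : {set T}.
Hypothesis invX : inverse_subsemigroup mul X.

Lemma invS_mul x y : x \in X -> y \in X -> mul x y \in X.
Proof. by case: invX => _ [closed_mul _]; apply: closed_mul. Qed.

Lemma invS_inv k g l : Some (k, g, l) \in X -> Some (l, g^-1, k) \in X.
Proof.
case: invX => _ [_ closed_inv] Xkgl; apply: (closed_inv _ _ Xkgl).
  by rewrite !(rees_mulE, eqxx) mulgV mul1g.
by rewrite !(rees_mulE, eqxx) mulVg mul1g.
Qed.

Definition full_block k l := forall g, Some (k, g, l) \in X.

Lemma full_block_sym k l : full_block k l -> full_block l k.
Proof. by move=> Xkl g; rewrite -[g]invgK; apply: invS_inv. Qed.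

Lemma full_block_trans k l m :
  full_block k l -> full_block l m -> full_block k m.
Proof.
move=> Xkl Xlm g; have := invS_mul (Xkl g) (Xlm 1).
by rewrite rees_mulE eqxx mulg1.
Qed.

Lemma full_block_from_diag k l g :
  full_block k k -> Some (k, g, l) \in X -> full_block k l.
Proof.
move=> Xkk Xkgl h; have := invS_mul (Xkk (h * g^-1)) Xkgl.
by rewrite rees_mulE eqxx mulgKV.
Qed.

Lemma full_blocks_setT (a b : K) :
  a != b -> (forall k l, full_block k l) -> X = [set: T].
Proof.
move=> neq_ab Xall; apply/setP => x; rewrite in_setT.
case: x => [[[k g] l]|]; first exact: Xall.
have := invS_mul (Xall a b 1) (Xall a b 1).
by rewrite rees_mulE eq_sym (negbTE neq_ab).
Qed.

End InverseSubsemigroup.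

Section TwoCover.
Variables X Y : {set T}.
Hypotheses (invX : inverse_subsemigroup mul X) (invY : inverse_subsemigroup mul Y).
Hypothesis cover : forall x, x \in X \/ x \in Y.

(* If g is missing from X and h from Y, then gh can lie in neither set, as
   gh h^-1 = g and g^-1 gh = h. *)
Lemma diag_full_block k : full_block X k k \/ full_block Y k k.
Proof.
have [/forallP|/forallPn [g notXg]] := boolP [forall g, Some (k, g, k) \in X].
  by left.
have [/forallP|/forallPn [h notYh]] := boolP [forall h, Some (k, h, k) \in Y].
  by right.
have Yg : Some (k, g, k) \in Y by case: (cover (Some (k, g, k))) => // Xg; case/negP: notXg.
have Xh : Some (k, h, k) \in X by case: (cover (Some (k, h, k))) => // Yh; case/negP: notYh.
case: (cover (Some (k, g * h, k))) => [Xgh|Ygh].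
  have := invS_mul invX Xgh (invS_inv invX Xh).
  by rewrite rees_mulE eqxx mulgK (negbTE notXg).
have := invS_mul invY (invS_inv invY Yg) Ygh.
by rewrite rees_mulE eqxx mulKg (negbTE notYh).
Qed.

End TwoCover.

Lemma full_block_cover (X Y : {set T}) :
  inverse_subsemigroup mul X -> inverse_subsemigroup mul Y ->
  (forall x, x \in X \/ x \in Y) ->
  forall k l, full_block X k l \/ full_block Y k l.
Proof.
move=> invX invY cover k l.
wlog X1 : X Y invX invY cover / Some (k, 1, l) \in X.
  move=> sym; case: (cover (Some (k, 1, l))) => [|Y1]; first exact: sym.
  suff: full_block Y k l \/ full_block X k l by case; [right|left].
  by apply: sym => // x; case: (cover x); [right|left].
case: (diag_full_block invX invY cover k) => [Xkk|Ykk].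
  by left; apply: full_block_from_diag Xkk X1.
have [Y1|notY1] := boolP (Some (k, 1, l) \in Y).
  by right; apply: full_block_from_diag Ykk Y1.
left=> g; case: (cover (Some (k, g, l))) => // Yg.
have := invS_mul invY (Ykk g^-1) Yg.
by rewrite rees_mulE eqxx mulVg (negbTE notY1).
Qed.

Lemma two_inv_cover_full (X Y : {set T}) (a b : K) :
  a != b -> inverse_subsemigroup mul X -> inverse_subsemigroup mul Y ->
  (forall x, x \in X \/ x \in Y) -> X = [set: T] \/ Y = [set: T].
Proof.
move=> neq_ab invX invY cover.
case: (per_cover_total (@full_block_sym _ invX) (@full_block_trans _ invX)
        (@full_block_sym _ invY) (@full_block_trans _ invY)
        (full_block_cover invX invY cover)) => Xall.
  by left; apply: full_blocks_setT neq_ab Xall.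
by right; apply: full_blocks_setT neq_ab Xall.
Qed.

Definition avoiding_set (a : K) : {set T} :=
  [set x : T | if x is Some (k, _, l) then (k != a) && (l != a) else true].

Lemma avoiding_set_inverse a : inverse_subsemigroup mul (avoiding_set a).
Proof.
split; first by apply/set0Pn; exists None; rewrite inE.
split.
  move=> [[[k g] l]|] [[[m h] n]|]; rewrite ?inE // rees_mulE.
  by case: (l == m) => //; case/andP=> -> _ /andP [_ ->].
move=> [[[k g] l]|] [[[m h] n]|]; rewrite ?inE //.
move=> /andP [neq_ka neq_la]; rewrite rees_mulE; case: eqP => // <-.
by rewrite rees_mulE; case: eqP => // -> _ _; rewrite neq_ka neq_la.
Qed.

Lemma avoiding_set_proper a : avoiding_set a != [set: T].
Proof.
apply/negP => /eqP avoid_all.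
have : Some (a, 1, a) \in avoiding_set a by rewrite avoid_all in_setT.
by rewrite inE eqxx.
Qed.

Lemma avoiding_set_cover a b c (x : T) :
  [/\ a != b, a != c & b != c] ->
  [|| x \in avoiding_set a, x \in avoiding_set b | x \in avoiding_set c].
Proof.
case: x => [[[k g] l]|] [neq_ab neq_ac neq_bc]; rewrite !inE //.
apply/negPn/negP; rewrite !negb_or !negb_and !negbK.
case/and3P=> /orP[]/eqP ka /orP[]/eqP kb /orP[]/eqP kc;
  by move: neq_ab neq_ac neq_bc; rewrite -?ka -?kb -?kc ?eqxx.
Qed.

Lemma inv_covered_by3 (a b c : K) :
  [/\ a != b, a != c & b != c] -> inv_covered_by mul 3.
Proof.
move=> distinct_abc.
exists (fun i : 'I_3 => avoiding_set (nth a [:: a; b; c] i)); split.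
  by move=> i; split; [apply: avoiding_set_inverse|apply: avoiding_set_proper].
apply/setP => x; rewrite in_setT; apply/bigcupP.
case/or3P: (avoiding_set_cover x distinct_abc) => Hx;
  by [exists ord0 | exists (lift ord0 ord0) | exists ord_max].
Qed.

Lemma not_inv_covered_by2 (a b : K) : a != b -> ~ inv_covered_by mul 2.
Proof.
move=> neq_ab [F [properF coverF]].
have cover x : x \in F ord0 \/ x \in F ord_max.
  have := in_setT x; rewrite -coverF => /bigcupP [[[|[|//]] i_lt] _ Fx].
    by left; rewrite (_ : ord0 = Ordinal i_lt) //; apply/val_inj.
  by right; rewrite (_ : ord_max = Ordinal i_lt) //; apply/val_inj.
case: (two_inv_cover_full neq_ab (properF ord0).1 (properF ord_max).1 cover).
  by apply/eqP; apply: (properF ord0).2.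
by apply/eqP; apply: (properF ord_max).2.
Qed.

End DiagonalRees.

Lemma not_inv_covered_by1 (T : finType) (mul : T -> T -> T) :
  ~ inv_covered_by mul 1.
Proof.
by move=> [F [properF coverF]]; case/negP: (properF ord0).2; rewrite -coverF big_ord1.
Qed.

Theorem mainTheorem15 (K : finType) (gT : finGroupType) (hK : 3 <= #|K|) :
  sigma_i_eq (@rees_mul K gT (@diagP K gT)) 3.
Proof.
pose a (i : 'I_3) : K := enum_val (widen_ord hK i).
have a_neq i j : i != j -> a i != a j.
  by apply: contra => /eqP /enum_val_inj /(congr1 val) /= /val_inj ->.
pose i1 : 'I_3 := lift ord0 ord0.
split=> //; split.
  by apply: (@inv_covered_by3 _ gT (a ord0) (a i1) (a ord_max)); split; apply: a_neq.
move=> [|[|[|m]]] // _ _; first exact: not_inv_covered_by1.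
exact: (@not_inv_covered_by2 _ gT (a ord0) (a i1) (a_neq ord0 i1 isT)).
Qed.
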